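(* Let $A$ be an $n\times n$ row substochastic matrix with at most one positive entry in each row. (1) If $A$ has an even number $2t$ of positive entries, then there is a listing $x_1,\dots,x_{2t}$ of these positive entries (each entry listed exactly once) such that $$\operatorname{per}(I-A)\le (1+x_1x_2)(1+x_3x_4)\cdots(1+x_{2t-1}x_{2t}).$$ (2) If $A$ has an odd number $2t+1$ of positive entries, then there is a listing $x_1,\dots,x_{2t+1}$ of these positive entries such that $$\operatorname{per}(I-A)< (1+x_1x_2)(1+x_3x_4)\cdots(1+x_{2t-1}x_{2t})\Big(1+\frac{x_{2t+1}^2}{4}\Big).$$
   Context: An $n\times n$ matrix is row substochastic if all its entries are nonnegative and each row sum is at most $1$. The permanent is $\operatorname{per}(M)=\sum_{\pi\in S_n}\prod_i m_{i\pi(i)}$, and $I$ is the identity matrix. Empty products equal $1$. *)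

From HB Require Import structures.
From mathcomp Require Import all_boot all_order all_algebra all_fingroup.
Set Implicit Arguments. Unset Strict Implicit. Unset Printing Implicit Defensive.
Import Order.TTheory GRing.Theory Num.Theory.
Local Open Scope ring_scope.

Definition per (R : comNzRingType) (n : nat) (M : 'M[R]_n) : R :=
  \sum_(s : 'S_n) \prod_(i < n) M i (s i).

Definition row_substochastic (R : realFieldType) (n : nat) (A : 'M[R]_n) : Prop :=
  (forall i j, 0 <= A i j) /\ (forall i, \sum_(j < n) A i j <= 1).

Definition pos_entries (R : realFieldType) (n : nat) (A : 'M[R]_n)
  : {set 'I_n * 'I_n} := [set p | 0 < A p.1 p.2].

Definition entry_values (R : realFieldType) (n : nat) (A : 'M[R]_n)
  (s : seq ('I_n * 'I_n)) : seq R := [seq A p.1 p.2 | p <- s].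

From HB Require Import structures.
From mathcomp Require Import all_boot all_order all_algebra all_fingroup.
From mathcomp Require Import zify.
Import Order.TTheory GRing.Theory Num.Theory.
Local Open Scope ring_scope.
Set Implicit Arguments. Unset Strict Implicit. Unset Printing Implicit Defensive.

(* Let row [i] of [A] have its positive entry [a_i] in column [f i].  In the expansion of
   per (I - A) a permutation contributes only if it sends every point it moves to its
   [f]-image; its term is then at most the product of the [a_i] over its moved set, which
   is a union of [f]-cycles of length at least two, and distinct permutations have distinct
   moved sets.  So per (I - A) <= Z(U), the total weight of such unions inside U = all rows.
   If C is a smallest nonempty union of cycles in U, any other one contains C or misses it,
   whence Z(U) <= (1 + w(C)) Z(U \ C), and w(C) <= a_c a_(f c) because all weights are at
   most 1.  Peeling off cycles pairs up distinct positive entries; the remaining ones are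
   listed afterwards and only meet factors >= 1, and in the odd case the extra factor
   1 + x^2/4 > 1 makes the bound strict. *)

Lemma ler_sum_subpred (R : numDomainType) (I : finType) (P Q : pred I) (F : I -> R) :
  (forall i, P i -> Q i) -> (forall i, Q i -> 0 <= F i) ->
  \sum_(i | P i) F i <= \sum_(i | Q i) F i.
Proof.
move=> PQ F_ge0; rewrite [X in _ <= X](bigID P) /=.
rewrite (eq_bigl P) => [|i]; last by case Pi: (P i); rewrite ?andbF ?andbT ?PQ.
by rewrite lerDl sumr_ge0 // => i /andP[/F_ge0].
Qed.

Section PermutedSets.
Variables (T : finType) (f : T -> T) (D : pred T).

(* [M] is a union of [f]-cycles lying in [D]. *)
Definition permuted_set (M : {set T}) : bool :=
  [&& M \subset D, f @: M \subset M & dinjectiveb f M].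

Lemma permuted_set0 : permuted_set set0.
Proof.
rewrite /permuted_set imset0 sub0set /=; apply/andP; split.
  by apply/subsetP => i; rewrite inE.
by apply/dinjectiveP => i; rewrite inE.
Qed.

Lemma permuted_set_imset M : permuted_set M -> f @: M = M.
Proof.
case/and3P => _ fM /dinjectiveP injM.
by apply/eqP; rewrite eqEcard fM (card_in_imset injM) leqnn.
Qed.

Lemma permuted_setI M C :
  permuted_set M -> permuted_set C -> permuted_set (M :&: C).
Proof.
case/and3P => MD fM /dinjectiveP injM /and3P[_ fC _]; apply/and3P; split.
- exact: subset_trans (subsetIl _ _) MD.
- apply/subsetP => _ /imsetP[i /setIP[iM iC] ->].
  by rewrite inE (subsetP fM) ?(subsetP fC) ?imset_f.
- by apply/dinjectiveP; apply: sub_in2 injM => i /setIP[].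
Qed.

Lemma permuted_setD M C :
  permuted_set M -> permuted_set C -> C \subset M -> permuted_set (M :\: C).
Proof.
case/and3P => MD fM /dinjectiveP injM pC sCM; apply/and3P; split.
- exact: subset_trans (subsetDl _ _) MD.
- apply/subsetP => _ /imsetP[i /setDP[iM iC] ->].
  rewrite inE (subsetP fM) ?imset_f // andbT; apply: contra iC.
  rewrite -{1}(permuted_set_imset pC) => /imsetP[j jC /injM-> //].
  exact: subsetP sCM j jC.
- by apply/dinjectiveP; apply: sub_in2 injM => i /setDP[].
Qed.

(* A permuted set of least size among the nonempty ones is a single cycle. *)
Lemma permuted_minimal_dichotomy (U C M : {set T}) :
  permuted_set C ->
  (forall N, permuted_set N -> N \subset U -> N != set0 -> (#|C| <= #|N|)%N) ->
  permuted_set M -> M \subset U -> (C \subset M) || [disjoint M & C].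
Proof.
move=> pC minC pM sMU; rewrite -setI_eq0.
have [_|ne] := eqVneq (M :&: C) set0; first by rewrite orbT.
rewrite orbF.
have le := minC _ (permuted_setI pM pC) (subset_trans (subsetIl M C) sMU) ne.
have /eqP <- : M :&: C == C by rewrite eqEcard subsetIr.
exact: subsetIl.
Qed.

End PermutedSets.

Section PairProducts.
Variable R : numDomainType.

Definition pair_prod (v : seq R) (q : nat) : R :=
  \prod_(k < q) (1 + v`_(2 * k) * v`_(2 * k).+1).

Lemma pair_prod_cons2 x y v q :
  pair_prod [:: x, y & v] q.+1 = (1 + x * y) * pair_prod v q.
Proof.
rewrite /pair_prod big_ord_recl; congr (_ * _).
by apply: eq_bigr => k _; rewrite !lift0 mulnS add2n.
Qed.

Lemma nth_ge0 (v : seq R) k : (forall x, x \in v -> 0 <= x) -> 0 <= v`_k.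
Proof.
move=> v_ge0; case: (ltnP k (size v)) => hk; last by rewrite nth_default.
exact/v_ge0/mem_nth.
Qed.

Lemma pair_prod_ge1 v q : (forall x, x \in v -> 0 <= x) -> 1 <= pair_prod v q.
Proof.
move=> v_ge0; rewrite /pair_prod; elim/big_ind: _ => //.
  by move=> x y x_ge1 y_ge1; rewrite -[1](mulr1 1) ler_pM.
by move=> k _; rewrite lerDl mulr_ge0 ?nth_ge0.
Qed.

(* Pairs beyond the end of [w ++ v] read default entries [0] and contribute [1]. *)
Lemma pair_prod_cat w v q t :
  size w = (2 * q)%N -> (q <= t)%N -> (forall x, x \in w ++ v -> 0 <= x) ->
  pair_prod w q <= pair_prod (w ++ v) t.
Proof.
move=> sw le_qt wv_ge0.
rewrite /pair_prod -(big_mkord xpredT (fun k => 1 + w`_(2 * k) * w`_(2 * k).+1)).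
rewrite -(big_mkord xpredT (fun k => 1 + (w ++ v)`_(2 * k) * (w ++ v)`_(2 * k).+1)).
rewrite (big_cat_nat (leq0n q) le_qt) /= -[X in X <= _]mulr1.
have w_ge0 x : x \in w -> 0 <= x by move=> xw; rewrite wv_ge0 // mem_cat xw.
apply: ler_pM.
- by apply: prodr_ge0 => k _; rewrite addr_ge0 ?mulr_ge0 ?nth_ge0.
- by [].
- rewrite !big_nat le_eqVlt; apply/orP; left; apply/eqP.
  apply: eq_bigr => k /andP[_ lt_kq]; rewrite !nth_cat sw.
  by have [-> ->] : (2 * k < 2 * q)%N /\ ((2 * k).+1 < 2 * q)%N by lia.
- elim/big_ind: _ => //; first by move=> x y x_ge1 y_ge1; rewrite -[1](mulr1 1) ler_pM.
  by move=> k _; rewrite lerDl mulr_ge0 ?nth_ge0.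
Qed.

End PairProducts.

Section CycleSums.
Variables (R : numDomainType) (T : finType) (f : T -> T) (D : pred T) (a : T -> R).
Hypotheses (a_ge0 : forall i, 0 <= a i) (a_le1 : forall i, a i <= 1).
Hypothesis D_moved : forall i, D i -> f i != i.

Definition cycle_sum (U : {set T}) : R :=
  \sum_(M : {set T} | permuted_set f D M && (M \subset U)) \prod_(i in M) a i.

Lemma cycle_sum_ge0 (U : {set T}) : 0 <= cycle_sum U.
Proof. by apply: sumr_ge0 => M _; apply: prodr_ge0. Qed.

Lemma cycle_sum_trivial (U : {set T}) :
  (forall M, permuted_set f D M -> M \subset U -> M = set0) -> cycle_sum U = 1.
Proof.
move=> only0; rewrite /cycle_sum (eq_bigl (pred1 set0)) ?big_pred1_eq ?big_set0 // => M.
apply/andP/eqP => [[pM sMU]|->]; first exact: only0.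
by rewrite sub0set permuted_set0.
Qed.

Lemma cycle_sum_split (U C : {set T}) :
  permuted_set f D C ->
  (forall M, permuted_set f D M -> M \subset U -> (C \subset M) || [disjoint M & C]) ->
  cycle_sum U <= (1 + \prod_(i in C) a i) * cycle_sum (U :\: C).
Proof.
move=> pC dichotomy; rewrite /cycle_sum (bigID (fun M : {set T} => C \subset M)) /=.
rewrite mulrDl mul1r addrC.
have W_ge0 (M : {set T}) : 0 <= \prod_(i in M) a i by apply: prodr_ge0.
apply: lerD.
  apply: ler_sum_subpred => [M /andP[/andP[pM sMU] nsCM]|M _ //].
  by rewrite pM subsetD sMU; have := dichotomy M pM sMU; rewrite (negPf nsCM).
pose above := [pred M : {set T} | permuted_set f D M && (M \subset U) && (C \subset M)].
have splitW M : above M -> \prod_(i in M) a i = \prod_(i in C) a i * \prod_(i in M :\: C) a i.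
  by case/andP => _ sCM; rewrite (big_setID C) /= (setIidPr sCM).
rewrite (eq_bigr _ splitW) -mulr_sumr ler_wpM2l ?W_ge0 //.
have injD : {in above &, injective (fun M => M :\: C)}.
  move=> M1 M2 /andP[_ s1] /andP[_ s2] /setP E; apply/setP => x.
  have := E x; rewrite !in_setD.
  by case xC: (x \in C) => //=; rewrite (subsetP s1) ?(subsetP s2).
rewrite [X in X <= _](eq_bigl (fun M => M \in above)) //.
rewrite -(big_imset (fun N : {set T} => \prod_(i in N) a i) injD) /=.
apply: ler_sum_subpred => [_ /imsetP[M /andP[/andP[pM sMU] sCM] ->]|N _ //].
by rewrite permuted_setD ?setSD.
Qed.

Lemma cycle_prod_le_pair (C : {set T}) c :
  permuted_set f D C -> c \in C -> \prod_(i in C) a i <= a c * a (f c).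
Proof.
move=> pC cC; have fcC : f c \in C by rewrite -(permuted_set_imset pC) imset_f.
have fc_neq_c : f c != c by case/and3P: pC => CD _ _; exact: D_moved (subsetP CD c cC).
rewrite (bigD1 c) //= (bigD1 (f c)) /=; last by rewrite fcC fc_neq_c.
rewrite mulrA -[X in _ <= X]mulr1 ler_pM ?mulr_ge0 ?prodr_ge0 //.
by apply: prodr_ile1 => i _; rewrite a_ge0 a_le1.
Qed.

Lemma cycle_sum_peel (U C0 : {set T}) :
  permuted_set f D C0 -> C0 \subset U -> C0 != set0 ->
  exists2 C, [/\ permuted_set f D C, C \subset U & C != set0] &
    forall c, c \in C -> cycle_sum U <= (1 + a c * a (f c)) * cycle_sum (U :\: C).
Proof.
move=> pC0 sC0U nC0.
pose P (C : {set T}) := [&& permuted_set f D C, C \subset U & C != set0].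
have PC0 : P C0 by apply/and3P.
case: (arg_minnP (fun C : {set T} => #|C|) PC0) => C /and3P[pC sCU nC] minC.
exists C => // c cC.
have dichotomy M : permuted_set f D M -> M \subset U -> (C \subset M) || [disjoint M & C].
  by apply: permuted_minimal_dichotomy => // N pN sNU nN; apply/minC/and3P.
apply: le_trans (cycle_sum_split pC dichotomy) _.
by rewrite ler_wpM2r ?cycle_sum_ge0 // lerD2l cycle_prod_le_pair.
Qed.

Lemma cycle_sum_le_pair_prod (U : {set T}) :
  exists r q, [/\ size r = (2 * q)%N, uniq r, {subset r <= U},
    (forall i, i \in r -> D i) & cycle_sum U <= pair_prod (map a r) q].
Proof.
have [m ltUm] := ubnP #|U|; elim: m => // m IH in U ltUm *.
have [C0 /and3P[pC0 sC0U nC0]|noC] :=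
  pickP (fun C => [&& permuted_set f D C, C \subset U & C != set0]); last first.
  exists [::], 0%N; split => //; rewrite /pair_prod big_ord0 cycle_sum_trivial //.
  by move=> M pM sMU; apply/eqP; have := noC M; rewrite pM sMU => /negbFE.
have [C [pC sCU nC] peel] := cycle_sum_peel pC0 sC0U nC0.
have [c cC] := set0Pn _ nC.
have fcC : f c \in C by rewrite -(permuted_set_imset pC) imset_f.
have CD i : i \in C -> D i by case/and3P: pC => CD _ _ /(subsetP CD).
have ltUCm : (#|U :\: C| < m)%N.
  rewrite -ltnS (leq_trans _ ltUm) // ltnS; apply/proper_card/properP.
  split; first exact: subsetDl.
  by exists c; rewrite ?(subsetP sCU) // in_setD cC.
have [r [q [sr ur rU rD le_rq]]] := IH _ ltUCm.
have notinr i : i \in C -> i \notin r by move=> iC; apply/negP => /rU; rewrite in_setD iC.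
exists [:: c, f c & r], q.+1; split.
- by rewrite /= sr mulnS add2n.
- by rewrite /= inE negb_or eq_sym D_moved ?CD ?notinr ?ur.
- by move=> i; rewrite !inE => /or3P[/eqP->|/eqP->|/rU/setDP[]//]; apply: (subsetP sCU).
- by move=> i; rewrite !inE => /or3P[/eqP->|/eqP->|/rD//]; apply: CD.
- rewrite map_cons map_cons pair_prod_cons2; apply: le_trans (peel c cC) _.
  by rewrite ler_wpM2l // addr_ge0 ?mulr_ge0.
Qed.

End CycleSums.

Section Permanent.
Variables (R : realFieldType) (n : nat) (A : 'M[R]_n).
Hypothesis hA : row_substochastic A.
Hypothesis hrow : forall i j1 j2, 0 < A i j1 -> 0 < A i j2 -> j1 = j2.

Definition pos_col (i : 'I_n) : 'I_n :=
  if [pick j | 0 < A i j] is Some j then j else i.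

Definition pos_val (i : 'I_n) : R := A i (pos_col i).

Definition pos_offdiag : pred 'I_n := [pred i | (0 < pos_val i) && (pos_col i != i)].

Lemma pos_colP i j : 0 < A i j -> j = pos_col i.
Proof.
rewrite /pos_col; case: pickP => [k Aik|A_le0] Aij; first exact: hrow Aij Aik.
by move: (A_le0 j); rewrite Aij.
Qed.

Lemma entry_le1 i j : A i j <= 1.
Proof.
case: hA => A_ge0 rows_le1; apply: le_trans (rows_le1 i).
by rewrite (bigD1 j) //= lerDl sumr_ge0.
Qed.

Lemma pos_val_ge0 i : 0 <= pos_val i.
Proof. exact: hA.1. Qed.

Lemma pos_val_le1 i : pos_val i <= 1.
Proof. exact: entry_le1. Qed.

Lemma pos_offdiag_moved i : pos_offdiag i -> pos_col i != i.
Proof. by case/andP. Qed.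

Definition follows_pos (s : 'S_n) : bool := [forall i, (s i != i) ==> (0 < A i (s i))].

Definition moved (s : 'S_n) : {set 'I_n} := [set i | s i != i].

Lemma follows_posP s i :
  follows_pos s -> s i != i -> s i = pos_col i /\ 0 < pos_val i.
Proof.
move=> /forallP/(_ i)/implyP si_pos /si_pos Ai_si.
by have E := pos_colP Ai_si; rewrite /pos_val -E.
Qed.

Lemma per_term_le (s : 'S_n) :
  \prod_i `|(1%:M - A) i (s i)| <=
    if follows_pos s then \prod_(i in moved s) pos_val i else 0.
Proof.
have A_ge0 := hA.1; case: ifP => [fs|/negbT].
  rewrite (bigID (fun i => s i != i)) /= -[X in _ <= X]mulr1.
  apply: ler_pM; rewrite ?prodr_ge0 //.
  - rewrite le_eqVlt (eq_bigl (fun i => i \in moved s)) => [|i]; last by rewrite inE.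
    apply/orP; left; apply/eqP; apply: eq_bigr => i; rewrite inE => si.
    rewrite !mxE eq_sym (negPf si) sub0r normrN ger0_norm ?A_ge0 //.
    by have [-> _] := follows_posP fs si.
  - apply: prodr_ile1 => i /negPn/eqP ->.
    by rewrite !mxE eqxx ger0_norm ?subr_ge0 ?entry_le1 // gerBl A_ge0 andbT.
rewrite negb_forall => /existsP[i]; rewrite negb_imply => /andP[si Ai_si_le0].
have Ai_si : A i (s i) = 0 by apply/eqP; rewrite eq_le A_ge0 andbT leNgt.
by rewrite (bigD1 i) //= !mxE eq_sym (negPf si) sub0r Ai_si oppr0 normr0 mul0r.
Qed.

Lemma moved_permuted s : follows_pos s -> permuted_set pos_col pos_offdiag (moved s).
Proof.
move=> fs; apply/and3P; split.
- apply/subsetP => i; rewrite !inE => si; have [E pos_i] := follows_posP fs si.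
  by rewrite pos_i -E si.
- apply/subsetP => x /imsetP[i]; rewrite inE => si ->.
  have [<- _] := follows_posP fs si; rewrite inE.
  by apply: contra si => /eqP/perm_inj->.
- apply/dinjectiveP => i j; rewrite !inE => si sj.
  have [<- _] := follows_posP fs si; have [<- _] := follows_posP fs sj.
  exact: perm_inj.
Qed.

Lemma moved_inj : {in follows_pos &, injective moved}.
Proof.
move=> s1 s2 fs1 fs2 /setP E; apply/permP => x; have := E x; rewrite !inE.
have [s1x|/negPn/eqP->] := boolP (s1 x != x);
  have [s2x|/negPn/eqP->] := boolP (s2 x != x) => // _.
by have [-> _] := follows_posP fs1 s1x; have [-> _] := follows_posP fs2 s2x.
Qed.

Lemma per_le_cycle_sum : per (1%:M - A) <= cycle_sum pos_col pos_offdiag pos_val setT.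
Proof.
rewrite /per; apply: le_trans (ler_norm _) _; apply: le_trans (ler_norm_sum _ _ _) _.
apply: le_trans
  (_ : \sum_s (if follows_pos s then \prod_(i in moved s) pos_val i else 0) <= _).
  by apply: ler_sum => s _; rewrite normr_prod per_term_le.
rewrite -big_mkcond /= (eq_bigl (fun s => s \in follows_pos)) //.
rewrite -(big_imset (fun M : {set 'I_n} => \prod_(i in M) pos_val i) moved_inj) /=.
apply: ler_sum_subpred => [_ /imsetP[s fs ->]|M _]; first by rewrite moved_permuted ?subsetT.
by apply: prodr_ge0 => i _; apply: pos_val_ge0.
Qed.

Definition pos_completion (r : seq 'I_n) : seq 'I_n :=
  r ++ [seq i <- enum 'I_n | (0 < pos_val i) && (i \notin r)].

Lemma pos_completion_perm r :
  uniq r -> (forall i, i \in r -> 0 < pos_val i) ->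
  perm_eq [seq (i, pos_col i) | i <- pos_completion r] (enum (pos_entries A)).
Proof.
move=> ur r_pos; rewrite /pos_completion; apply: uniq_perm; last 1 first.
- move=> [i j]; rewrite mem_enum inE /=; apply/mapP/idP => [[k + [-> ->]]|Aij].
    by rewrite mem_cat mem_filter => /orP[/r_pos|/andP[/andP[]]].
  exists i; last by rewrite -(pos_colP Aij).
  rewrite mem_cat mem_filter mem_enum andbT /pos_val -(pos_colP Aij) Aij /=.
  exact: orbN.
- rewrite map_inj_uniq => [|i j [] //]; rewrite cat_uniq ur filter_uniq ?enum_uniq //=.
  by rewrite andbT; apply/hasPn => i; rewrite mem_filter => /andP[/andP[]].
- exact: enum_uniq.
Qed.

Lemma per_le_pair_prod_listing :
  exists s, perm_eq s (enum (pos_entries A)) /\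
    forall t, (#|pos_entries A| <= (2 * t).+1)%N ->
      per (1%:M - A) <= pair_prod (entry_values A s) t.
Proof.
have [r [q [sr ur _ r_off le_rq]]] :=
  cycle_sum_le_pair_prod pos_val_ge0 pos_val_le1 pos_offdiag_moved setT.
have r_pos i : i \in r -> 0 < pos_val i by move/r_off/andP=> [].
pose l := pos_completion r; have ps := pos_completion_perm ur r_pos.
exists [seq (i, pos_col i) | i <- l]; split => // t le_t.
have -> : entry_values A [seq (i, pos_col i) | i <- l] = map pos_val l.
  by rewrite /entry_values -map_comp.
have size_l : size l = #|pos_entries A|.
  by rewrite -(size_map (fun i => (i, pos_col i))) (perm_size ps) -cardE.
apply: le_trans per_le_cycle_sum (le_trans le_rq _); rewrite map_cat.
apply: pair_prod_cat; first by rewrite size_map.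
  by move: size_l le_t; rewrite size_cat sr; lia.
by rewrite -map_cat => x /mapP[i _ ->]; apply: pos_val_ge0.
Qed.

End Permanent.

Lemma entry_values_gt0 (R : realFieldType) (n : nat) (A : 'M[R]_n) s k :
  perm_eq s (enum (pos_entries A)) -> (k < size s)%N -> 0 < (entry_values A s)`_k.
Proof.
move=> ps lt_ks; have : (entry_values A s)`_k \in entry_values A s.
  by rewrite mem_nth ?size_map.
by case/mapP => p; rewrite (perm_mem ps) mem_enum inE => + ->.
Qed.

Theorem mainTheorem8 (R : realFieldType) (n : nat) (A : 'M[R]_n)
  (hA : row_substochastic A)
  (hrow : forall i j1 j2, 0 < A i j1 -> 0 < A i j2 -> j1 = j2) :
  (forall t : nat, #|pos_entries A| = (2 * t)%N ->
     exists s : seq ('I_n * 'I_n),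
       perm_eq s (enum (pos_entries A)) /\
       per (1%:M - A) <=
         \prod_(k < t) (1 + (entry_values A s)`_(2 * k) * (entry_values A s)`_(2 * k).+1))
  /\
  (forall t : nat, #|pos_entries A| = (2 * t).+1 ->
     exists s : seq ('I_n * 'I_n),
       perm_eq s (enum (pos_entries A)) /\
       per (1%:M - A) <
         (\prod_(k < t) (1 + (entry_values A s)`_(2 * k) * (entry_values A s)`_(2 * k).+1))
         * (1 + (entry_values A s)`_(2 * t) ^+ 2 / 4)).
Proof.
have [s [ps per_le]] := per_le_pair_prod_listing hA hrow.
have size_s : size s = #|pos_entries A| by rewrite (perm_size ps) -cardE.
split => t card_pos; exists s; split => //.
  by apply: per_le; rewrite card_pos.
apply: le_lt_trans (per_le t _) _; first by rewrite card_pos.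
have prod_ge1 : 1 <= pair_prod (entry_values A s) t.
  by apply: pair_prod_ge1 => _ /mapP[p _ ->]; apply: hA.1.
rewrite ltr_pMr ?(lt_le_trans ltr01 prod_ge1) // ltrDl divr_gt0 ?exprn_gt0 //.
by apply: entry_values_gt0; rewrite // size_s card_pos.
Qed.
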